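(* Let $(X,\mathscr{R})$ be a closed mixed reaction network with $\mathscr{R}=\mathscr{R}_{\mathrm{rev}}\sqcup\mathscr{R}_{\mathrm{irr}}$ and stoichiometric matrix $S$. Then $(X,\mathscr{R})$ is thermodynamically sound if and only if there is no irreversible futile cycle.
   Context: A reaction network (RN) $(X,\mathscr{R})$ consists of a finite non-empty set $X$ of species and a finite non-empty set $\mathscr{R}$ of reactions. Each reaction $r$ is given by stoichiometric coefficients $s^-_{xr},s^+_{xr}\in\mathbb{N}_0$ ($x\in X$), written $\sum_x s^-_{xr}x\to\sum_x s^+_{xr}x$. The stoichiometric matrix $S\in\mathbb{Z}^{X\times\mathscr{R}}$ has entries $S_{xr}=s^+_{xr}-s^-_{xr}$. A reaction $r$ is proper if there are $x,y\in X$ with $S_{xr}<0<S_{yr}$, and the RN is closed if all its reactions are proper. The reverse $\bar r$ of a reaction $r$ has $s^-_{x\bar r}=s^+_{xr}$ and $s^+_{x\bar r}=s^-_{xr}$ for all $x$. A mixed RN has $\mathscr{R}=\mathscr{R}_{\mathrm{rev}}\sqcup\mathscr{R}_{\mathrm{irr}}$, where $r\in\mathscr{R}_{\mathrm{rev}}$ implies $\bar r\in\mathscr{R}_{\mathrm{rev}}$, and $r\in\mathscr{R}_{\mathrm{irr}}$ implies $\bar r\notin\mathscr{R}$. Vector notation for $v\in\mathbb{R}^{\mathscr{R}}$: - $v\ge0$ means all entries are non-negative. - $v>0$ means $v\ge 0$ and $v\ne0$. - $v\gg0$ means all entries are positive. A futile cycle is a vector $v>0$ with $Sv=0$. An irreversible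 futile cycle is a futile cycle with $\operatorname{supp}(v)\subseteq\mathscr{R}_{\mathrm{irr}}$. A vector of reaction energies is any $g\in\mathbb{R}^{\mathscr{R}}$. The triple $(X,\mathscr{R},g)$ is thermodynamic if $Sv=0$ implies $\langle g,v\rangle=0$ for all $v\in\mathbb{R}^{\mathscr{R}}$, i.e. $g\in(\ker S)^\perp$. The mixed RN is thermodynamically sound if there is $g$ such that $(X,\mathscr{R},g)$ is thermodynamic and $g_r<0$ for all $r\in\mathscr{R}_{\mathrm{irr}}$. *)

From mathcomp Require Import all_boot all_order all_algebra.
Set Implicit Arguments. Unset Strict Implicit. Unset Printing Implicit Defensive.
Import Order.TTheory GRing.Theory Num.Theory.
Local Open Scope ring_scope.

Section RN.
Variables (X Rn : finType).
(* sm x r = s^-_{xr}, sp x r = s^+_{xr} *)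
Variables (sm sp : X -> Rn -> nat).

Definition stoich (x : X) (r : Rn) : int := (sp x r)%:Z - (sm x r)%:Z.

(* reactions form a set: a reaction is determined by its coefficients *)
Definition reactions_distinct : Prop :=
  forall r r' : Rn, (forall x, sm x r = sm x r' /\ sp x r = sp x r') -> r = r'.

Definition reaction_network : Prop :=
  (0 < #|X|)%N /\ (0 < #|Rn|)%N /\ reactions_distinct.

Definition proper (r : Rn) : Prop :=
  exists x y, (stoich x r < 0)%R /\ (0 < stoich y r)%R.

Definition closed_RN : Prop := forall r, proper r.

Definition is_reverse (r r' : Rn) : Prop :=
  forall x, sm x r' = sp x r /\ sp x r' = sm x r.

(* mixed RN: R_irr = irr, R_rev = complement of irr *)
Definition mixed_RN (irr : {set Rn}) : Prop :=
  (forall r, r \notin irr -> exists r', r' \notin irr /\ is_reverse r r') /\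
  (forall r, r \in irr -> ~ exists r', is_reverse r r').

Variable R : realFieldType.

Definition in_kerS (v : Rn -> R) : Prop :=
  forall x, \sum_(r : Rn) (stoich x r)%:~R * v r = 0.

Definition vpos (v : Rn -> R) : Prop :=
  (forall r, 0 <= v r) /\ (exists r, v r != 0).

Definition futile_cycle (v : Rn -> R) : Prop := vpos v /\ in_kerS v.

Definition irreversible_futile_cycle (irr : {set Rn}) (v : Rn -> R) : Prop :=
  futile_cycle v /\ (forall r, v r != 0 -> r \in irr).

Definition thermodynamic (g : Rn -> R) : Prop :=
  forall v : Rn -> R, in_kerS v -> \sum_(r : Rn) g r * v r = 0.

Definition thermodynamically_sound (irr : {set Rn}) : Prop :=
  exists g : Rn -> R, thermodynamic g /\ (forall r, r \in irr -> g r < 0).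

End RN.

From mathcomp Require Import all_boot all_order all_algebra.
From mathcomp Require Import ring lra.
Set Implicit Arguments. Unset Strict Implicit. Unset Printing Implicit Defensive.
Import Order.TTheory GRing.Theory Num.Theory.
Local Open Scope ring_scope.

(* Gordan's alternative: for vectors a_j (j in J) in R^X over an ordered field,
   either some y has <y, a_j> < 0 for all j in J, or some nonzero w >= 0
   supported on J has sum_j w_j a_j = 0.  Induction on |J|: remove some a_k;
   if a witness y for the rest is not already negative on a_k, recurse on the
   projections of the remaining a_j onto the hyperplane orthogonal to a_k, and
   lift either outcome back.  Applied to the columns of S indexed by R_irr,
   the first alternative gives thermodynamic energies g = S^T y that are
   negative on R_irr, the second an irreversible futile cycle; and no such g
   and cycle v coexist, since <g, v> would be both 0 and negative. *)

Section Gordan.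
Variables (R : realFieldType) (X I : finType).
Implicit Types (u v y z b : X -> R) (a : I -> X -> R) (w c d : I -> R) (J : {set I}).

Definition dot u v := \sum_x u x * v x.

Definition combination w a : X -> R := fun x => \sum_i w i * a i x.

Definition negative_on a J y := forall j, j \in J -> dot y (a j) < 0.

Definition nonneg_dependence a J w :=
  [/\ vpos w, forall i, w i != 0 -> i \in J & forall x, combination w a x = 0].

Lemma dotC u v : dot u v = dot v u.
Proof. by apply: eq_bigr => x _; rewrite mulrC. Qed.

Lemma dot_self_ge0 u : 0 <= dot u u.
Proof. by apply: sumr_ge0 => x _; rewrite -expr2 sqr_ge0. Qed.

Lemma dot_self_eq0 u : dot u u = 0 -> forall x, u x = 0.
Proof.
move=> /psumr_eq0P uu0 x; apply/eqP; rewrite -sqrf_eq0 expr2; apply/eqP.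
by apply: uu0 => // i _; rewrite -expr2 sqr_ge0.
Qed.

Lemma dot_scaleBl t u v z : dot (fun x => t * u x - v x) z = t * dot u z - dot v z.
Proof. by rewrite /dot mulr_sumr -sumrB; apply: eq_bigr => x _; ring. Qed.

Lemma dot_combination y w a : dot y (combination w a) = \sum_i dot y (a i) * w i.
Proof.
rewrite /dot /combination; under eq_bigr do rewrite mulr_sumr.
rewrite exchange_big /=; apply: eq_bigr => i _.
by rewrite mulr_suml; apply: eq_bigr => x _; ring.
Qed.

Lemma weighted_sum_lt0 J w c : vpos w -> (forall i, w i != 0 -> i \in J) ->
  (forall j, j \in J -> c j < 0) -> \sum_i c i * w i < 0.
Proof.
move=> [w_ge0 [i0 wi0]] w_supp c_lt0.
have wi0_gt0 : 0 < w i0 by rewrite lt_def wi0 w_ge0.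
have head_lt0 : c i0 * w i0 < 0 by rewrite pmulr_llt0 // c_lt0 // w_supp.
have rest_le0 : \sum_(i | i != i0) c i * w i <= 0.
  apply: sumr_le0 => i _; have [-> | wi] := eqVneq (w i) 0; first by rewrite mulr0.
  by rewrite mulr_le0_ge0 ?w_ge0 // ltW ?c_lt0 ?w_supp.
rewrite (bigD1 i0) //=; lra.
Qed.

Lemma exists_scale_lt0 J c d : (forall j, j \in J -> c j < 0) ->
  exists t, forall j, j \in J -> t * c j + d j < 0.
Proof.
move=> c_lt0; pose T := \sum_(i in J) `|d i| / - c i.
exists (1 + T) => j jJ; have cj := c_lt0 j jJ.
have le_T : `|d j| / - c j <= T.
  rewrite /T (bigD1 j) //= lerDl; apply: sumr_ge0 => i /andP[iJ _].
  by rewrite divr_ge0 // oppr_ge0 ltW ?c_lt0.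
have := ler_wnM2r (ltW cj) le_T.
rewrite invrN mulrN mulNr divfK ?lt_eqF // => Tc.
have := ler_norm (d j); lra.
Qed.

Definition proj_coef b u := dot u b / dot b b.

Definition proj b u : X -> R := fun x => u x - proj_coef b u * b x.

Lemma dot_projl b u v : dot (proj b u) v = dot u v - proj_coef b u * dot b v.
Proof. by rewrite /dot mulr_sumr -sumrB; apply: eq_bigr => x _; rewrite /proj; ring. Qed.

Lemma dot_proj_sym b u v : dot (proj b u) v = dot u (proj b v).
Proof. by rewrite (dotC u) !dot_projl /proj_coef (dotC b u) (dotC b v) (dotC v u); ring. Qed.

Lemma dot_proj_orth b u : dot b b != 0 -> dot (proj b u) b = 0.
Proof. by move=> bb0; rewrite dot_projl /proj_coef divfK // subrr. Qed.

Lemma combination_proj w a b x :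
  combination w (fun i => proj b (a i)) x =
  combination w a x - (\sum_i w i * proj_coef b (a i)) * b x.
Proof.
by rewrite /combination mulr_suml -sumrB; apply: eq_bigr => i _; rewrite /proj; ring.
Qed.

Lemma nonneg_dependenceS a J J' w :
  J \subset J' -> nonneg_dependence a J w -> nonneg_dependence a J' w.
Proof. by move=> /subsetP JJ' [w_pos w_supp w_comb]; split=> // i /w_supp /JJ'. Qed.

Lemma nonneg_dependence_shift a J w k mu : k \in J ->
  (forall i, 0 <= w i) -> (forall i, w i != 0 -> i \in J) -> mu < 0 ->
  (forall x, combination w a x = mu * a k x) ->
  nonneg_dependence a J (fun i => w i - mu * (i == k)%:R).
Proof.
move=> kJ w_ge0 w_supp mu_lt0 w_comb; split.
- split=> [i | ]; first by rewrite subr_ge0 (le_trans _ (w_ge0 i)) // nmulr_rle0 ?ler0n.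
  by exists k; rewrite eqxx mulr1 gt_eqF // subr_gt0 (lt_le_trans mu_lt0).
- by move=> i; have [-> | ik] := eqVneq i k; rewrite ?mulr0 ?subr0 => // /w_supp.
- move=> x; rewrite /combination; under eq_bigr do rewrite mulrBl.
  rewrite sumrB -/(combination w a x) w_comb (bigD1 k) //= eqxx mulr1 big1 ?addr0.
    by rewrite subrr.
  by move=> i /negbTE ->; rewrite !mulr0 mul0r.
Qed.

Section ProjectAwayFrom.
Variables (a : I -> X -> R) (J : {set I}) (k : I).
Let ak := a k.
Let pa i := proj ak (a i).

Lemma negative_on_unproject z : 0 < dot ak ak ->
  negative_on pa (J :\ k) z -> exists y, negative_on a J y.
Proof.
move=> akak_gt0 z_neg; have akak0 := lt0r_neq0 akak_gt0.
pose z' := proj ak z.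
have z'_neg j : j \in J :\ k -> dot z' (a j) < 0 by rewrite dot_proj_sym; apply: z_neg.
have [t Ht] := exists_scale_lt0 (fun j => - dot ak (a j)) z'_neg.
(* [z'] is orthogonal to [ak]: subtracting [ak] makes it negative there, and a
   large enough scale [t] keeps it negative on the other vectors. *)
exists (fun x => t * z' x - ak x) => j jJ; rewrite dot_scaleBl.
have [-> | jk] := eqVneq j k; first by rewrite dot_proj_orth // mulr0 sub0r oppr_lt0.
by apply: Ht; rewrite !inE jk.
Qed.

Lemma nonneg_dependence_unproject y w : k \in J ->
  negative_on a (J :\ k) y -> 0 <= dot y ak ->
  nonneg_dependence pa (J :\ k) w -> exists w', nonneg_dependence a J w'.
Proof.
move=> kJ y_neg yak_ge0 [w_pos w_supp w_comb].
pose mu := \sum_i w i * proj_coef ak (a i).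
have w_comb_a x : combination w a x = mu * ak x.
  by apply/eqP; rewrite -subr_eq0 -combination_proj w_comb.
(* Tested against [y], the left side of [w_comb_a] is negative. *)
have mu_lt0 : mu < 0.
  have := weighted_sum_lt0 w_pos w_supp y_neg.
  rewrite -dot_combination /dot; under eq_bigr do rewrite w_comb_a mulrCA.
  rewrite -mulr_sumr -/(dot y ak); apply: contraTT; rewrite -!leNgt => mu_ge0.
  exact: mulr_ge0.
exists (fun i => w i - mu * (i == k)%:R); apply: nonneg_dependence_shift => //.
- by case: w_pos.
- by move=> i /w_supp; rewrite inE => /andP[].
Qed.

End ProjectAwayFrom.

Theorem gordan a J : (exists y, negative_on a J y) \/ (exists w, nonneg_dependence a J w).
Proof.
move Hn : #|J| => n; elim: n J a Hn => [|n IH] J a cardJ.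
  by left; exists (fun _ => 0) => j; rewrite (cards0_eq cardJ) inE.
have [k kJ] : exists k, k \in J by apply/set0Pn; rewrite -card_gt0 cardJ.
have cardJk : #|J :\ k| = n by move: (cardsD1 k J); rewrite kJ cardJ add1n => -[].
have [[y y_neg] | [w w_dep]] := IH _ a cardJk; last first.
  by right; exists w; apply: nonneg_dependenceS w_dep; apply: subD1set.
have [yak_lt0 | yak_ge0] := ltrP (dot y (a k)) 0.
  left; exists y => j jJ; have [-> // | jk] := eqVneq j k.
  by apply: y_neg; rewrite !inE jk.
have [akak0 | akak_neq0] := eqVneq (dot (a k) (a k)) 0.
  right; exists (fun i => 0 - (-1) * (i == k)%:R). (* [a k = 0] is dependent alone *)
  apply: nonneg_dependence_shift => //; rewrite ?ltrN10 ?eqxx // => x.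
  by rewrite /combination big1 ?dot_self_eq0 ?mulr0 // => i _; rewrite mul0r.
have akak_gt0 : 0 < dot (a k) (a k) by rewrite lt_def akak_neq0 dot_self_ge0.
have [[z z_neg] | [w w_dep]] := IH _ (fun i => proj (a k) (a i)) cardJk.
  by left; apply: negative_on_unproject z_neg.
by right; apply: nonneg_dependence_unproject y_neg yak_ge0 w_dep.
Qed.

End Gordan.

Section ReactionNetwork.
Variables (R : realFieldType) (X Rn : finType) (sm sp : X -> Rn -> nat).

Definition stoich_col (r : Rn) (x : X) : R := (stoich sm sp x r)%:~R.

Lemma in_kerS_combination (v : Rn -> R) :
  in_kerS sm sp v <-> forall x, combination v stoich_col x = 0.
Proof.
have comb_eq x : combination v stoich_col x = \sum_r (stoich sm sp x r)%:~R * v r.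
  by apply: eq_bigr => r _; rewrite mulrC.
by split=> ker_v x; rewrite ?comb_eq // -comb_eq.
Qed.

Lemma thermodynamic_dot_stoich_col (y : X -> R) :
  thermodynamic sm sp (fun r => dot y (stoich_col r)).
Proof.
move=> v /in_kerS_combination ker_v; rewrite -dot_combination.
by rewrite /dot big1 // => x _; rewrite ker_v mulr0.
Qed.

End ReactionNetwork.

Theorem theorem2 (R : realFieldType) (X Rn : finType) (sm sp : X -> Rn -> nat)
  (irr : {set Rn}) :
  reaction_network sm sp -> closed_RN sm sp -> mixed_RN sm sp irr ->
  (thermodynamically_sound sm sp R irr <->
   ~ exists v : Rn -> R, irreversible_futile_cycle sm sp irr v).
Proof.
move=> _ _ _; split.
- move=> [g [thermo_g g_irr]] [v [[v_pos ker_v] v_supp]].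
  have := weighted_sum_lt0 v_pos v_supp g_irr.
  by rewrite (thermo_g v ker_v) ltxx.
- move=> no_cycle.
  have [[y y_neg] | [w [w_pos w_supp w_comb]]] := gordan (stoich_col R sm sp) irr.
    by exists (fun r => dot y (stoich_col R sm sp r)); split=> //;
      apply: thermodynamic_dot_stoich_col.
  by case: no_cycle; exists w; do 2!split=> //; apply/in_kerS_combination.
Qed.
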